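(* If $\mathcal{R}$ is a weak bisimulation, then any parallel extension $\mathcal{R}'$ of $\mathcal{R}$ is also a weak bisimulation.
   Context: Setting: a graph-based calculus for wireless networks with local broadcast. Networks are built as $M,N::=G\langle\Phi\rangle \mid M\backslash c \mid M\oplus_D N$. Here $G$ is a finite undirected graph of locations. $\Phi$ maps each location to a sequential process. $M\oplus_D N$ is the composition of networks with disjoint location sets, adding edges $D\subseteq|M|\times|N|$. $|M|$ denotes the set of locations of $M$. Labelled transitions $M\xrightarrow{\delta}M'$ have labels $\delta::=p:\alpha\mid\tau$, where $\alpha::=cv\mid\overline{c}v$ is a receive or broadcast of $v$ on channel $c$ at location $p$. The rules for composition are: - (N-Bcast): if $M\xrightarrow{p:\overline{c}v}M'$, $N\xrightarrow{q:cv}N'$ and $(p,q)\in D$, then $M\oplus_DN\xrightarrow{p:\overline{c}v}M'\oplus_DN'$ and $N\oplus_DM\xrightarrow{p:\overline{c}v}N'\oplus_DM'$. - (N-ParL) and (N-ParR): either component may move alone. - (N-Res1): $M\xrightarrow{p:\overline{c}v}M'$ gives $M\backslash c\xrightarrow{\tau}M'\backslash c$. $M\xrightarrow{\tau^{\ast}}M'$ means a finite, possibly empty, sequence of $\tau$-steps. $M\stackrel{p:\alpha}{\Longrightarrow}M'$ means $M\xrightarrow{\tau^{\ast}}M_1\xrightarrow{p:\alpha}M_1'\xrightarrow{\tau^{\ast}}M'$ for some $M_1,M_1'$. A localized relation is $\mathcal{R}\subseteq{\bf Net}\times\mathcal{P}({\sf Loc}^2)\times{\bf Net}$ with $E\subseteq|M|\times|N|$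 whenever $(M,E,N)\in\mathcal{R}$. It is symmetric if $(M,E,N)\in\mathcal{R}$ implies $(N,E^{-1},M)\in\mathcal{R}$. A weak bisimulation is a symmetric localized relation such that, whenever $(M,E,N)\in\mathcal{R}$, both of the following hold: - $M\xrightarrow{\tau}M'$ implies $N\xrightarrow{\tau^{\ast}}N'$ with $(M',E,N')\in\mathcal{R}$ for some $N'$. - $M\xrightarrow{p:\alpha}M'$ implies $N\stackrel{q:\alpha}{\Longrightarrow}N'$ for some $q$ with $(p,q)\in E$ and $(M',E,N')\in\mathcal{R}$. A triple $(D,D',E)$ with $D\subseteq A\times B$, $D'\subseteq A\times B'$ and $E\subseteq B\times B'$ is adapted if, for all $(a,b,b')$ with $(b,b')\in E$, we have $(a,b)\in D\iff(a,b')\in D'$. A localized relation $\mathcal{R}'$ is a parallel extension of $\mathcal{R}$ if every $(U,F,V)\in\mathcal{R}'$ satisfies all of the following: - $U=O\oplus_C M$ and $V=O\oplus_D N$ for some network $O$, some $(M,E,N)\in\mathcal{R}$, $C\subseteq|O|\times|M|$ and $D\subseteq|O|\times|N|$. - $(C,D,E)$ is adapted. - $F={\rm Id}_{|O|}\cup E$. *)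

From Stdlib Require Import List Relations.
Import ListNotations.

Set Implicit Arguments.

Section Calculus.

Context {Loc Chan Val Proc : Type}.

Record graph := Graph {
  gverts : list Loc;
  gedge : Loc -> Loc -> Prop;
  gedge_sym : forall x y, gedge x y -> gedge y x;
  gedge_in : forall x y, gedge x y -> In x gverts /\ In y gverts
}.

Inductive action := Recv (c : Chan) (v : Val) | Bcast (c : Chan) (v : Val).

Inductive label := Tau | Act (p : Loc) (a : action).

(* M, N ::= G<Phi> | M\c | M (+)_D N,  with D a relation between the
   locations of the left and of the right component. *)
Inductive net :=
| Base (G : graph) (Phi : Loc -> Proc)
| Res (M : net) (c : Chan)
| Par (M : net) (D : Loc -> Loc -> Prop) (N : net).

Fixpoint locs (M : net) : Loc -> Prop :=
  match M with
  | Base G _ => fun x => In x (gverts G)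
  | Res M _ => locs M
  | Par M _ N => fun x => locs M x \/ locs N x
  end.

Fixpoint wf (M : net) : Prop :=
  match M with
  | Base _ _ => True
  | Res M _ => wf M
  | Par M D N =>
      wf M /\ wf N /\ (forall x, locs M x -> locs N x -> False) /\
      (forall x y, D x y -> locs M x /\ locs N y)
  end.

Definition chan_of (a : action) : Chan :=
  match a with Recv c _ => c | Bcast c _ => c end.

(* The LTS.  The semantics of base networks G<Phi> (i.e. of sequential
   processes) is a parameter [bstep]; actions of a base network take place at
   a location of its graph. *)
Variable bstep : graph -> (Loc -> Proc) -> label -> (Loc -> Proc) -> Prop.

Inductive step : net -> label -> net -> Prop :=
| S_Base G Phi l Phi' :
    bstep G Phi l Phi' ->
    (forall p a, l = Act p a -> In p (gverts G)) ->
    step (Base G Phi) l (Base G Phi')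
| S_BcastL M D N M' N' p q c v :
    step M (Act p (Bcast c v)) M' -> step N (Act q (Recv c v)) N' -> D p q ->
    step (Par M D N) (Act p (Bcast c v)) (Par M' D N')
| S_BcastR M D N M' N' p q c v :
    step N (Act q (Bcast c v)) N' -> step M (Act p (Recv c v)) M' -> D p q ->
    step (Par M D N) (Act q (Bcast c v)) (Par M' D N')
| S_ParL M D N M' l : step M l M' -> step (Par M D N) l (Par M' D N)
| S_ParR M D N N' l : step N l N' -> step (Par M D N) l (Par M D N')
| S_Res1 M M' c p v :
    step M (Act p (Bcast c v)) M' -> step (Res M c) Tau (Res M' c)
| S_Res2 M M' c l :
    step M l M' ->
    (forall p a, l = Act p a -> chan_of a <> c) ->
    step (Res M c) l (Res M' c).

Definition taus : net -> net -> Prop :=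
  clos_refl_trans net (fun M M' => step M Tau M').

Definition wstep (M : net) (p : Loc) (a : action) (M' : net) : Prop :=
  exists M1 M1', taus M M1 /\ step M1 (Act p a) M1' /\ taus M1' M'.

Definition lrel := net -> (Loc -> Loc -> Prop) -> net -> Prop.

Definition localized (R : lrel) : Prop :=
  forall M E N, R M E N ->
    wf M /\ wf N /\ (forall x y, E x y -> locs M x /\ locs N y).

Definition symmetric_lrel (R : lrel) : Prop :=
  forall M E N, R M E N -> R N (fun x y => E y x) M.

Definition weak_bisim (R : lrel) : Prop :=
  localized R /\ symmetric_lrel R /\
  forall M E N, R M E N ->
    (forall M', step M Tau M' -> exists N', taus N N' /\ R M' E N') /\
    (forall p a M', step M (Act p a) M' ->
       exists q N', E p q /\ wstep N q a N' /\ R M' E N').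

Definition adapted (D D' E : Loc -> Loc -> Prop) : Prop :=
  forall a b b', E b b' -> (D a b <-> D' a b').

(* The (maximal) parallel extension of R: all triples
   (O (+)_C M, Id_|O| u E, O (+)_D N) with (M,E,N) in R and (C,D,E) adapted
   (relations on location pairs are compared extensionally). *)
Definition par_ext (R : lrel) : lrel :=
  fun U F V =>
    exists O C D M E N,
      U = Par O C M /\ V = Par O D N /\ R M E N /\ adapted C D E /\
      wf U /\ wf V /\
      (forall x y, F x y <-> ((x = y /\ locs O x) \/ E x y)).

Definition is_par_ext (R R' : lrel) : Prop :=
  forall U F V, R' U F V -> par_ext R U F V.

End Calculus.

Arguments Tau {Loc Chan Val}.

(* A transition of [O (+)_C M] is a move of the context [O] alone, a move of
   the component [M] alone, or a broadcast across the boundary.  A move of [O]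
   is copied on the other side and leaves the pair [(M, N)] untouched; a move
   of [M] is answered by the move of [N] that [R] provides.  A broadcast
   between [p] in [O] and [q] in [M] is answered by the partner [q'] of [q]:
   since [E q q'], adaptedness turns the edge [C p q] into [D p q'].
   Transitions never change the location set of a network, which keeps all
   the well-formedness side conditions stable. *)

From Stdlib Require Import Relations.

Set Implicit Arguments.

Section Transitions.

Context {Loc Chan Val Proc : Type}.

Definition same_locs (M M' : @net Loc Chan Proc) : Prop :=
  forall x, locs M x <-> locs M' x.

Lemma same_locs_refl (M : @net Loc Chan Proc) : same_locs M M.
Proof. intros x; tauto. Qed.

Lemma same_locs_trans (M1 M2 M3 : @net Loc Chan Proc) :
  same_locs M1 M2 -> same_locs M2 M3 -> same_locs M1 M3.
Proof. intros H12 H23 x; rewrite (H12 x); apply H23. Qed.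

Lemma wf_Par_same_locs (O O' N N' : @net Loc Chan Proc) D :
  wf (Par O D N) -> wf O' -> wf N' -> same_locs O O' -> same_locs N N' ->
  wf (Par O' D N').
Proof.
  simpl; intros (_ & _ & Hdisj & HD) WO' WN' HO HN.
  split; [exact WO'|split; [exact WN'|split]].
  - intros x Ox Nx; apply (Hdisj x); [apply HO|apply HN]; assumption.
  - intros x y Dxy; rewrite <- (HO x), <- (HN y); auto.
Qed.

Variable bstep : @graph Loc -> (Loc -> Proc) -> @label Loc Chan Val -> (Loc -> Proc) -> Prop.

Lemma step_same_locs M l M' : step bstep M l M' -> same_locs M M'.
Proof.
  induction 1; intros x; simpl; try tauto.
  - rewrite (IHstep1 x), (IHstep2 x); tauto.
  - rewrite (IHstep1 x), (IHstep2 x); tauto.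
  - rewrite (IHstep x); tauto.
  - rewrite (IHstep x); tauto.
  - apply IHstep.
  - apply IHstep.
Qed.

Lemma taus_same_locs M M' : taus bstep M M' -> same_locs M M'.
Proof.
  induction 1.
  - eapply step_same_locs; eauto.
  - apply same_locs_refl.
  - eapply same_locs_trans; eauto.
Qed.

Lemma wstep_same_locs M p a M' : wstep bstep M p a M' -> same_locs M M'.
Proof.
  intros (M1 & M1' & T1 & S & T2).
  eapply same_locs_trans; [apply (taus_same_locs T1)|].
  eapply same_locs_trans; [apply (step_same_locs S)|].
  apply (taus_same_locs T2).
Qed.

Lemma step_act_locs M p a M' : step bstep M (Act p a) M' -> locs M p.
Proof.
  intros H; remember (Act p a) as l eqn:Hl; revert p a Hl.
  induction H; simpl; intros p0 a0 Hl; try discriminate.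
  - eauto.
  - injection Hl as -> _; eauto.
  - injection Hl as -> _; eauto.
  - left; eauto.
  - right; eauto.
  - eauto.
Qed.

Lemma step_wf M l M' : step bstep M l M' -> wf M -> wf M'.
Proof.
  induction 1; intros W; try exact I; try exact (IHstep W);
    pose proof W as (WM & WN & _);
    eapply wf_Par_same_locs; eauto using step_same_locs, same_locs_refl.
Qed.

Lemma step_wstep M p a M' : step bstep M (Act p a) M' -> wstep bstep M p a M'.
Proof. intros S; exists M, M'; split; [apply rt_refl|split; [exact S|apply rt_refl]]. Qed.

Lemma taus_ParR O D N N' :
  taus bstep N N' -> taus bstep (Par O D N) (Par O D N').
Proof.
  induction 1.
  - apply rt_step, S_ParR; assumption.
  - apply rt_refl.
  - eapply rt_trans; eauto.
Qed.

Lemma wstep_ParR O D N q a N' :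
  wstep bstep N q a N' -> wstep bstep (Par O D N) q a (Par O D N').
Proof.
  intros (N1 & N1' & T1 & S & T2).
  exists (Par O D N1), (Par O D N1'); repeat split; auto using taus_ParR.
  apply S_ParR; assumption.
Qed.

Lemma wstep_BcastL O D N O' N' p q c v :
  step bstep O (Act p (Bcast c v)) O' -> wstep bstep N q (Recv c v) N' -> D p q ->
  wstep bstep (Par O D N) p (Bcast c v) (Par O' D N').
Proof.
  intros SO (N1 & N1' & T1 & S & T2) Dpq.
  exists (Par O D N1), (Par O' D N1'); repeat split; auto using taus_ParR.
  eapply S_BcastL; eauto.
Qed.

Lemma wstep_BcastR O D N O' N' p q c v :
  wstep bstep N q (Bcast c v) N' -> step bstep O (Act p (Recv c v)) O' -> D p q ->
  wstep bstep (Par O D N) q (Bcast c v) (Par O' D N').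
Proof.
  intros (N1 & N1' & T1 & S & T2) SO Dpq.
  exists (Par O D N1), (Par O' D N1'); repeat split; auto using taus_ParR.
  eapply S_BcastR; eauto.
Qed.

End Transitions.

Section ParallelExtension.

Context {Loc Chan Val Proc : Type}.
Variable bstep : @graph Loc -> (Loc -> Proc) -> @label Loc Chan Val -> (Loc -> Proc) -> Prop.

Definition simulation (R : @lrel Loc Chan Proc) : Prop :=
  forall M E N, R M E N ->
    (forall M', step bstep M Tau M' -> exists N', taus bstep N N' /\ R M' E N') /\
    (forall p a M', step bstep M (Act p a) M' ->
       exists q N', E p q /\ wstep bstep N q a N' /\ R M' E N').

Lemma par_ext_localized (R : @lrel Loc Chan Proc) :
  localized R -> localized (par_ext R).
Proof.
  intros HRloc U F V (O & C & D & M & E & N & -> & -> & HR & _ & WU & WV & HF).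
  split; [exact WU|split; [exact WV|]].
  intros x y Fxy; apply HF in Fxy; simpl.
  destruct Fxy as [[<- Ox]|Exy]; [tauto|].
  destruct (HRloc _ _ _ HR) as (_ & _ & HE); destruct (HE _ _ Exy); tauto.
Qed.

Lemma par_ext_symmetric (R : @lrel Loc Chan Proc) :
  symmetric_lrel R -> symmetric_lrel (par_ext R).
Proof.
  intros HRsym U F V (O & C & D & M & E & N & -> & -> & HR & Had & WU & WV & HF).
  exists O, D, C, N, (fun x y => E y x), M.
  split; [reflexivity|split; [reflexivity|split; [exact (HRsym _ _ _ HR)|]]].
  split; [|split; [exact WV|split; [exact WU|]]].
  - intros a b b' Ebb'; symmetry; exact (Had a b' b Ebb').
  - intros x y; rewrite (HF y x); split.
    + intros [[-> Ox]|Eyx]; auto.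
    + intros [[-> Ox]|Eyx]; auto.
Qed.

Section Residuals.

Variable R : @lrel Loc Chan Proc.
Hypothesis R_localized : localized R.
Hypothesis R_simulation : simulation R.

Variables (O M N : @net Loc Chan Proc) (C D E F : Loc -> Loc -> Prop).
Hypothesis related : R M E N.
Hypothesis adapted_CDE : adapted C D E.
Hypothesis wf_left : wf (Par O C M).
Hypothesis wf_right : wf (Par O D N).
Hypothesis F_def : forall x y, F x y <-> ((x = y /\ locs O x) \/ E x y).

Let wf_context : wf O := proj1 wf_left.

Lemma par_ext_residual O' M' N' :
  wf O' -> same_locs O O' -> R M' E N' -> same_locs M M' -> same_locs N N' ->
  par_ext R (Par O' C M') F (Par O' D N').
Proof.
  intros WO' HO HR' HM HN.
  destruct (R_localized HR') as (WM' & WN' & _).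
  exists O', C, D, M', E, N'.
  split; [reflexivity|split; [reflexivity|split; [exact HR'|split; [exact adapted_CDE|]]]].
  split; [|split]; [eapply wf_Par_same_locs; eauto ..|].
  intros x y; rewrite (F_def x y), (HO x); tauto.
Qed.

Lemma par_ext_context_step l O' :
  step bstep O l O' -> par_ext R (Par O' C M) F (Par O' D N).
Proof.
  intros SO; apply par_ext_residual;
    eauto using step_wf, step_same_locs, same_locs_refl.
Qed.

Lemma par_ext_tau_step U' :
  step bstep (Par O C M) Tau U' ->
  exists V', taus bstep (Par O D N) V' /\ par_ext R U' F V'.
Proof.
  intros St; inversion St as [| | |? ? ? O' ? SO|? ? ? M' ? SM| |]; subst.
  - exists (Par O' D N); split.
    + apply rt_step, S_ParL; exact SO.
    + exact (par_ext_context_step SO).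
  - destruct (proj1 (R_simulation related) _ SM) as (N' & TN & HR').
    exists (Par O D N'); split.
    + exact (taus_ParR _ _ TN).
    + apply par_ext_residual;
        eauto using same_locs_refl, step_same_locs, taus_same_locs.
Qed.

Lemma par_ext_act_step p a U' :
  step bstep (Par O C M) (Act p a) U' ->
  exists q V', F p q /\ wstep bstep (Par O D N) q a V' /\ par_ext R U' F V'.
Proof.
  intros St.
  inversion St as [|? ? ? O' M' ? q c v SO SM Cpq|? ? ? O' M' p' ? c v SM SO Cp'q
                  |? ? ? O' ? SO|? ? ? M' ? SM| |]; subst.
  - destruct (proj2 (R_simulation related) _ _ _ SM) as (q' & N' & Eqq' & WN & HR').
    exists p, (Par O' D N'); split; [|split].
    + apply F_def; left; split; [reflexivity|exact (step_act_locs SO)].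
    + exact (wstep_BcastL D SO WN (proj1 (adapted_CDE p Eqq') Cpq)).
    + apply par_ext_residual;
        eauto using step_wf, step_same_locs, wstep_same_locs.
  - destruct (proj2 (R_simulation related) _ _ _ SM) as (q' & N' & Eqq' & WN & HR').
    exists q', (Par O' D N'); split; [|split].
    + apply F_def; right; exact Eqq'.
    + exact (wstep_BcastR D WN SO (proj1 (adapted_CDE p' Eqq') Cp'q)).
    + apply par_ext_residual;
        eauto using step_wf, step_same_locs, wstep_same_locs.
  - exists p, (Par O' D N); split; [|split].
    + apply F_def; left; split; [reflexivity|exact (step_act_locs SO)].
    + apply step_wstep, S_ParL; exact SO.
    + exact (par_ext_context_step SO).
  - destruct (proj2 (R_simulation related) _ _ _ SM) as (q & N' & Epq & WN & HR').
    exists q, (Par O D N'); split; [|split].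
    + apply F_def; right; exact Epq.
    + exact (wstep_ParR _ _ WN).
    + apply par_ext_residual;
        eauto using same_locs_refl, step_same_locs, wstep_same_locs.
Qed.

End Residuals.

Lemma par_ext_simulation (R : @lrel Loc Chan Proc) :
  localized R -> simulation R -> simulation (par_ext R).
Proof.
  intros HRloc HRsim U F V (O & C & D & M & E & N & -> & -> & HR & Had & WU & WV & HF).
  split; [eapply par_ext_tau_step|eapply par_ext_act_step]; eassumption.
Qed.

End ParallelExtension.

Theorem proposition2 (Loc Chan Val Proc : Type)
  (bstep : @graph Loc -> (Loc -> Proc) -> @label Loc Chan Val -> (Loc -> Proc) -> Prop)
  (R : @lrel Loc Chan Proc) :
  weak_bisim bstep R -> weak_bisim bstep (par_ext R).
Proof.
  intros (HRloc & HRsym & HRsim).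
  split; [|split].
  - exact (par_ext_localized HRloc).
  - exact (par_ext_symmetric HRsym).
  - exact (par_ext_simulation HRloc HRsim).
Qed.
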